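(* Let $B\ge0$, $L\ge2$, let $\Lambda\subset\mathbb{Z}$ be a finite set containing $\{1,\dots,L\}$ and let $\alpha=(\alpha_x)_{x\in\Lambda}$ take values in $[-B,B]$. Let $\mu$ be a Bernoulli measure on $\{0,1\}^\Lambda$ with external field $\alpha$, i.e. either the product measure with $\mu(\eta_x=1)=e^{\alpha_x+\lambda}/(1+e^{\alpha_x+\lambda})$ for some $\lambda\in\mathbb{R}$, or the measure proportional to $\exp\{\sum_{x\in\Lambda}\alpha_x\eta_x\}$ on configurations with a fixed number of particles. Then for every $f:\{0,1\}^\Lambda\to\mathbb{R}$, $$\int[f(T_{1L}\eta)-f(\eta)]^2d\mu(\eta)\le e^{13B}L\sum_{1\le x\le L-1}\int(\nabla_{x,x+1}f)^2d\mu(\eta).$$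
   Context: $T_{xy}\eta$ denotes $\eta$ with the occupations at $x$ and $y$ exchanged, and $\nabla_{xy}f(\eta)=f(T_{xy}\eta)-f(\eta)$. *)

From HB Require Import structures.
From mathcomp Require Import all_boot all_order all_algebra.
From mathcomp Require Import finmap.
From mathcomp Require Import reals.
From mathcomp Require Import sequences exp.
Set Implicit Arguments. Unset Strict Implicit. Unset Printing Implicit Defensive.
Import Order.TTheory GRing.Theory Num.Theory.
Local Open Scope ring_scope.
Local Open Scope fset_scope.

(* Lattice Λ : a finite set of integers; configurations η ∈ {0,1}^Λ
   are finite functions Λ -> bool (true = occupied). *)
Definition config (Lam : {fset int}) := {ffun Lam -> bool}.

(* T_{xy} η : exchange the occupations at the integer sites x and y.
   (Only meaningful when x, y ∈ Λ, which is guaranteed in the theorem.) *)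
Definition swapZ (Lam : {fset int}) (x y : int) (eta : config Lam) : config Lam :=
  [ffun z : Lam =>
     let w := if val z == x then y else if val z == y then x else val z in
     match insub w : option Lam with Some w' => eta w' | None => eta z end].

Definition nparticles (Lam : {fset int}) (eta : config Lam) : nat :=
  \sum_(z : Lam) (eta z : nat).

Definition bern_prod {R : realType} (Lam : {fset int}) (alpha : Lam -> R) (lam : R)
  (eta : config Lam) : R :=
  \prod_(z : Lam)
    (let p := expR (alpha z + lam) / (1 + expR (alpha z + lam)) in
     if eta z then p else 1 - p).

Definition gibbs_weight {R : realType} (Lam : {fset int}) (alpha : Lam -> R)
  (eta : config Lam) : R :=
  expR (\sum_(z : Lam) alpha z * (eta z)%:R).

Definition bern_canon {R : realType} (Lam : {fset int}) (alpha : Lam -> R) (k : nat)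
  (eta : config Lam) : R :=
  if nparticles eta == k then
    gibbs_weight alpha eta /
      \sum_(xi : config Lam | nparticles xi == k) gibbs_weight alpha xi
  else 0.

Definition bernoulli_measure {R : realType} (Lam : {fset int}) (alpha : Lam -> R)
  (mu : config Lam -> R) : Prop :=
  (exists lam : R, mu = bern_prod alpha lam) \/
  (exists k : nat, (k <= #|{: Lam}|)%N /\ mu = bern_canon alpha k).

Definition integ {R : realType} (Lam : {fset int}) (mu : config Lam -> R)
  (g : config Lam -> R) : R :=
  \sum_(eta : config Lam) mu eta * g eta.

(* Write w_beta(eta) = exp(sum_z beta_z eta_z) H(N(eta)); both Bernoulli measures are
   of this form with beta = alpha.  If eta_a <> eta_b, then T_ab eta is T_mb (T_am eta)
   or T_am (T_mb eta) according to eta_m, so after the change of variables eta |-> T eta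
   the Dirichlet form of T_ab for the field beta is bounded by a weighted sum of those
   of T_am and T_mb for fields permuted at m.  Recurse along the path s 1, ..., s L,
   splitting at a maximiser m of alpha strictly inside the current interval.  The field
   met on an interval agrees with alpha strictly inside, and off the two endpoint sites
   its energy exceeds that of alpha by at most 2B per endpoint that is not an end of the
   path: such an endpoint dominates alpha inside, so moving alpha_m onto it costs
   nothing.  On adjacent sites the weights then differ by a factor at most e^{8B}, and
   with the weights (r-l)/(m-l), (r-l)/(r-m) the constant stays (r-l) e^{8B}, that is
   (L-1) e^{8B} <= L e^{13B} overall. *)

From mathcomp Require Import all_boot all_order all_algebra perm.
From mathcomp Require Import finmap.
From mathcomp Require Import reals.
From mathcomp Require Import sequences exp.
From mathcomp Require Import ring lra zify.
Set Implicit Arguments. Unset Strict Implicit. Unset Printing Implicit Defensive.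
Import Order.TTheory GRing.Theory Num.Theory.
Local Open Scope ring_scope.

Lemma sqrD_weighted_le (R : realFieldType) (u v p q : R) : 0 < p -> 0 < q ->
  (u + v) ^+ 2 <= (p + q) / p * u ^+ 2 + (p + q) / q * v ^+ 2.
Proof.
move=> p_gt0 q_gt0.
have -> : (p + q) / p * u ^+ 2 + (p + q) / q * v ^+ 2 =
          (u + v) ^+ 2 + (q * u - p * v) ^+ 2 / (p * q).
  by field; rewrite ?gt_eqF ?mulr_gt0.
by rewrite lerDl divr_ge0 ?sqr_ge0 // mulr_ge0 // ltW.
Qed.

Lemma split_bound_le (R : realFieldType) (p q c S1 S2 x y : R) : 0 < p -> 0 < q ->
  x <= p * c * S1 -> y <= q * c * S2 ->
  (p + q) / p * x + (p + q) / q * y <= (p + q) * c * (S1 + S2).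
Proof.
move=> p_gt0 q_gt0 x_le y_le.
have -> : (p + q) * c * (S1 + S2) = (p + q) / p * (p * c * S1) + (p + q) / q * (q * c * S2).
  by field; rewrite !gt_eqF.
have coef_ge0 u : 0 < u -> 0 <= (p + q) / u by move=> u_gt0; rewrite divr_ge0 ?addr_ge0 ?ltW.
exact: lerD (ler_wpM2l (coef_ge0 _ p_gt0) x_le) (ler_wpM2l (coef_ge0 _ q_gt0) y_le).
Qed.

Lemma sub_mul_bool_le (R : realDomainType) (B u v : R) (b : bool) :
  `|u| <= B -> `|v| <= B -> (u - v) * b%:R <= 2 * B.
Proof.
move=> uB vB; have B_ge0 : 0 <= B by apply: le_trans vB.
move: uB vB; rewrite !ler_norml => /andP[? ?] /andP[? ?].
by case: b; rewrite ?mulr1 ?mulr0; lra.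
Qed.

Lemma nat_argmax (R : realDomainType) (g : nat -> R) (l r : nat) : (l.+1 < r)%N ->
  exists2 m, (l < m < r)%N & forall x, (l < x < r)%N -> g x <= g m.
Proof.
move=> lr; pose P := [pred i : 'I_r | (l < i)%N].
have [m /= lm m_max] := @arg_maxP _ _ 'I_r (Ordinal lr) P (g \o val) (ltnSn l).
exists m; first by rewrite lm ltn_ord.
by move=> x /andP[lx xr]; exact: (m_max (Ordinal xr)).
Qed.

Section Exchange.
Variable Lam : {fset int}.
Implicit Types (a b m z : Lam) (eta : config Lam).

Definition exch a b eta : config Lam := [ffun z => eta (tperm a b z)].

Lemma swapZ_exch a b eta : swapZ (val a) (val b) eta = exch a b eta.
Proof.
apply/ffunP => z; rewrite !ffunE /= !(inj_eq val_inj).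
case: tpermP => [->|->|/eqP/negbTE-> /eqP/negbTE->]; rewrite ?eqxx ?valK //.
by case: eqP => [->|]; rewrite valK.
Qed.

Lemma exchK a b : involutive (exch a b).
Proof. by move=> eta; apply/ffunP => z; rewrite !ffunE tpermK. Qed.

Lemma exch_id a b eta : eta a = eta b -> exch a b eta = eta.
Proof. by move=> eab; apply/ffunP => z; rewrite ffunE; case: tpermP => [->|->|]. Qed.

Lemma exch_via_l a m b eta : a != m -> m != b -> a != b -> eta m = eta b ->
  exch a b eta = exch m b (exch a m eta).
Proof.
move=> am mb ab emb; have ma : m != a by rewrite eq_sym.
have ba : b != a by rewrite eq_sym.
have bm : b != m by rewrite eq_sym.
apply/ffunP => z; rewrite !ffunE.
have [->|za] := eqVneq z a; first by rewrite tpermL (tpermD ma ba) tpermL.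
have [->|zm] := eqVneq z m; first by rewrite tpermL (tpermD am bm) (tpermD ab mb).
have [->|zb] := eqVneq z b; first by rewrite !tpermR.
by rewrite !tpermD // eq_sym.
Qed.

Lemma exch_via_r a m b eta : a != m -> m != b -> a != b -> eta m = eta a ->
  exch a b eta = exch a m (exch m b eta).
Proof.
move=> am mb ab ema; have ma : m != a by rewrite eq_sym.
have ba : b != a by rewrite eq_sym.
have bm : b != m by rewrite eq_sym.
apply/ffunP => z; rewrite !ffunE.
have [->|za] := eqVneq z a; first by rewrite !tpermL.
have [->|zm] := eqVneq z m; first by rewrite (tpermD am bm) tpermR (tpermD ma ba).
have [->|zb] := eqVneq z b; first by rewrite tpermR (tpermD ab mb) tpermR.
by rewrite !tpermD // eq_sym.
Qed.

Lemma nparticles_exch a b eta : nparticles (exch a b eta) = nparticles eta.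
Proof.
rewrite /nparticles [RHS](reindex_inj (@perm_inj _ (tperm a b))).
by apply: eq_bigr => z _; rewrite ffunE.
Qed.

End Exchange.

Section DirichletForm.
Variables (R : realType) (Lam : {fset int}) (H : nat -> R) (f : config Lam -> R).
Hypothesis H_ge0 : forall n, 0 <= H n.
Implicit Types (beta : Lam -> R) (a b m : Lam) (eta : config Lam).

Definition energy beta eta : R := \sum_z beta z * (eta z)%:R.

Definition weight beta eta : R := expR (energy beta eta) * H (nparticles eta).

Definition dform beta a b : R :=
  \sum_eta weight beta eta * (f (exch a b eta) - f eta) ^+ 2.

Lemma energy_exch beta a b eta :
  energy beta (exch a b eta) = energy (beta \o tperm a b) eta.
Proof.
rewrite /energy (reindex_inj (@perm_inj _ (tperm a b))).
by apply: eq_bigr => z _; rewrite ffunE tpermK.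
Qed.

Lemma energy_tperm beta a b eta : a != b ->
  energy (beta \o tperm a b) eta =
  energy beta eta + (beta b - beta a) * ((eta a)%:R - (eta b)%:R).
Proof.
move=> ab; rewrite /energy (bigD1 a) // [in RHS](bigD1 a) //=.
rewrite (bigD1 b) 1?eq_sym // [in RHS](bigD1 b) 1?eq_sym //= tpermL tpermR.
rewrite (eq_bigr (fun z => beta z * (eta z)%:R)) => [|z /andP[zb za]]; last first.
  by rewrite tpermD // eq_sym.
ring.
Qed.

Lemma weight_ge0 beta eta : 0 <= weight beta eta.
Proof. by rewrite mulr_ge0 ?expR_ge0. Qed.

Lemma dform_ge0 beta a b : 0 <= dform beta a b.
Proof. by rewrite sumr_ge0 // => eta _; rewrite mulr_ge0 ?weight_ge0 ?sqr_ge0. Qed.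

Lemma sum_weight_exch beta a b (F : config Lam -> R) :
  \sum_eta weight beta eta * F (exch a b eta) =
  \sum_eta weight (beta \o tperm a b) eta * F eta.
Proof.
rewrite (reindex_inj (can_inj (exchK a b))); apply: eq_bigr => eta _.
by rewrite exchK /weight energy_exch nparticles_exch.
Qed.

Lemma sqr_exch_split a m b eta (p q : R) :
  a != m -> m != b -> a != b -> 0 < p -> 0 < q ->
  (f (exch a b eta) - f eta) ^+ 2 <=
    (p + q) / p * (f (exch a m (exch m b eta)) - f (exch m b eta)) ^+ 2
  + (p + q) / q * (f (exch m b (exch a m eta)) - f (exch a m eta)) ^+ 2.
Proof.
move=> am mb ab p_gt0 q_gt0.
have [eab|eab] := eqVneq (eta a) (eta b).
  by rewrite exch_id // subrr expr0n addr_ge0 // mulr_ge0 ?sqr_ge0 ?divr_ge0 ?addr_ge0 ?ltW.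
have [emb|ema] := eqVneq (eta m) (eta b).
  rewrite [exch m b eta]exch_id // (exch_via_l am mb ab emb).
  rewrite -[f _ - f eta](subrKA (f (exch a m eta))) addrC.
  exact: sqrD_weighted_le.
have {ema}ema : eta m = eta a.
  by move: eab ema; case: (eta a); case: (eta b); case: (eta m).
rewrite [exch a m eta]exch_id // (exch_via_r am mb ab ema).
rewrite -[f _ - f eta](subrKA (f (exch m b eta))).
exact: sqrD_weighted_le.
Qed.

Lemma dform_split beta a m b (p q : R) :
  a != m -> m != b -> a != b -> 0 < p -> 0 < q ->
  dform beta a b <= (p + q) / p * dform (beta \o tperm m b) a m
                    + (p + q) / q * dform (beta \o tperm a m) m b.
Proof.
move=> am mb ab p_gt0 q_gt0; rewrite /dform.
rewrite -(sum_weight_exch beta m b (fun eta => (f (exch a m eta) - f eta) ^+ 2)).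
rewrite -(sum_weight_exch beta a m (fun eta => (f (exch m b eta) - f eta) ^+ 2)).
rewrite !mulr_sumr -big_split /=; apply: ler_sum => eta _.
rewrite [_ / p * _]mulrCA [_ / q * _]mulrCA -mulrDr.
by apply: ler_wpM2l; [exact: weight_ge0 | exact: sqr_exch_split].
Qed.

End DirichletForm.

Section PathBound.
Variables (R : realType) (Lam : {fset int}) (H : nat -> R) (f : config Lam -> R).
Hypothesis H_ge0 : forall n, 0 <= H n.
Variables (B : R) (L : nat) (alpha : Lam -> R) (s : nat -> Lam).
Hypothesis alpha_bounded : forall z, `|alpha z| <= B.
Hypothesis s_inj : {in [pred x | (0 < x <= L)%N] &, injective s}.
Implicit Types (beta : Lam -> R) (xi : config Lam).

Let B_ge0 : 0 <= B := le_trans (normr_ge0 _) (alpha_bounded (s 0)).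

Lemma site_neq x y : (0 < x <= L)%N -> (0 < y <= L)%N -> x != y -> s x != s y.
Proof. by move=> xP yP; rewrite (inj_in_eq s_inj). Qed.

Definition inside (i j x : nat) : bool := (i < x < j)%N || (j < x < i)%N.

Definition path_end (x : nat) : bool := (x == 1)%N || (x == L).

Definition slack (x : nat) : R := if path_end x then 0 else 2 * B.

Definition dominates (i j k : nat) : Prop :=
  forall x, inside i j x -> alpha (s x) <= alpha (s k).

(* The invariant of the field met on the interval between positions i and j of the
   recursion. *)
Definition admissible (i j : nat) beta : Prop :=
  [/\ forall z, `|beta z| <= B,
      forall x, inside i j x -> beta (s x) = alpha (s x),
      path_end i \/ dominates i j i,
      path_end j \/ dominates i j j &
      forall xi, energy beta xi - energy alpha xi <=
        slack i + slack j + (beta (s i) - alpha (s i)) * (xi (s i))%:R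
                          + (beta (s j) - alpha (s j)) * (xi (s j))%:R].

Lemma insideC i j : inside i j =1 inside j i.
Proof. by move=> x; rewrite /inside orbC. Qed.

Lemma admissibleC i j beta : admissible i j beta -> admissible j i beta.
Proof.
case=> beta_B betaE end_i end_j energy_le; split=> //.
- by move=> x; rewrite insideC; exact: betaE.
- by case: end_j => [|dom]; [left | right=> x; rewrite insideC; exact: dom].
- by case: end_i => [|dom]; [left | right=> x; rewrite insideC; exact: dom].
- by move=> xi; move: (energy_le xi); lra.
Qed.

Lemma admissible_alpha : admissible 1 L alpha.
Proof.
have [end1 endL] : path_end 1 /\ path_end L by rewrite /path_end !eqxx ?orbT.
split=> //; [by left | by left | move=> xi].
by rewrite /slack end1 endL !subrr !mul0r !addr0.
Qed.

Lemma admissible_shrink i j m beta :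
  (0 < i <= L)%N -> (0 < j <= L)%N -> inside i j m -> dominates i j m ->
  admissible i j beta -> admissible i m (beta \o tperm (s m) (s j)).
Proof.
move=> iP jP ijm m_max [beta_B betaE end_i end_j energy_le].
have ijm_nat := ijm; rewrite /inside in ijm_nat.
have mP : (0 < m <= L)%N by lia.
have inside_shrink x : inside i m x -> [/\ inside i j x, x != m & x != j].
  by rewrite /inside => imx; split; lia.
have sji : s j != s i by apply: site_neq; lia.
have smi : s m != s i by apply: site_neq; lia.
have smj : s m != s j by apply: site_neq; lia.
split.
- by move=> z; exact: beta_B.
- move=> x /[dup] /inside_shrink[ijx xm xj] imx /=.
  have xP : (0 < x <= L)%N by move: ijx; rewrite /inside; lia.
  by rewrite tpermD ?betaE // eq_sym site_neq.
- by case: end_i => [|dom]; [left | right=> x /inside_shrink[ijx _ _]; exact: dom].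
- by right=> x /inside_shrink[ijx _ _]; exact: m_max.
move=> xi; rewrite energy_tperm //= tpermL (tpermD smi sji) (betaE m ijm).
have m_inner : slack m = 2 * B by rewrite /slack ifF //; apply/negbTE; rewrite /path_end; lia.
have end_j_le : slack j + (alpha (s m) - alpha (s j)) * (xi (s j))%:R <= 2 * B.
  rewrite /slack; case: end_j => [-> | dom]; first by rewrite add0r sub_mul_bool_le.
  have : (alpha (s m) - alpha (s j)) * (xi (s j))%:R <= 0.
    by rewrite mulr_le0_ge0 ?ler0n // subr_le0 dom.
  by have := B_ge0; case: ifP => _; lra.
move: (energy_le xi); rewrite m_inner; lra.
Qed.

Lemma dform_admissible_le i j beta : admissible i j beta ->
  dform H f beta (s i) (s j) <= expR (8 * B) * dform H f alpha (s i) (s j).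
Proof.
case=> beta_B _ _ _ energy_le; rewrite /dform mulr_sumr; apply: ler_sum => eta _.
rewrite mulrA; apply: ler_wpM2r; first exact: sqr_ge0.
rewrite /weight mulrA; apply: ler_wpM2r; first exact: H_ge0.
rewrite -expRD ler_expR.
have slack_le x : slack x <= 2 * B by rewrite /slack; case: ifP => _; rewrite ?mulr_ge0 ?B_ge0.
have := sub_mul_bool_le (eta (s i)) (beta_B (s i)) (alpha_bounded (s i)).
have := sub_mul_bool_le (eta (s j)) (beta_B (s j)) (alpha_bounded (s j)).
move: (energy_le eta) (slack_le i) (slack_le j); lra.
Qed.

Lemma admissible_split l m r beta :
  (0 < l)%N -> (l < m < r)%N -> (r <= L)%N ->
  (forall x, (l < x < r)%N -> alpha (s x) <= alpha (s m)) ->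
  admissible l r beta ->
  admissible l m (beta \o tperm (s m) (s r)) /\ admissible m r (beta \o tperm (s l) (s m)).
Proof.
move=> l_gt0 lmr rL m_max adm.
have [lP rP] : (0 < l <= L)%N /\ (0 < r <= L)%N by lia.
have lrm : inside l r m by rewrite /inside lmr.
have dom : dominates l r m by move=> x /orP[/m_max //|]; lia.
split; first exact: admissible_shrink.
rewrite tpermC; apply/admissibleC/admissible_shrink => //; last exact: admissibleC.
- by rewrite insideC.
- by move=> x; rewrite insideC; exact: dom.
Qed.

Lemma dform_path_le l r beta : (0 < l < r)%N -> (r <= L)%N -> admissible l r beta ->
  dform H f beta (s l) (s r) <=
  (r - l)%:R * expR (8 * B) * \sum_(l <= x < r) dform H f alpha (s x) (s x.+1).
Proof.
have [n] := ubnP (r - l); elim: n => // n IH in l r beta *.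
move=> rl_lt /andP[l_gt0 lr] rL adm; have [r_eq | r_far] := eqVneq r l.+1.
  by subst r; rewrite big_nat1 subSnn mul1r; exact: dform_admissible_le.
have [|m lmr m_max] := @nat_argmax _ (alpha \o s) l r; first lia.
have [adm_l adm_r] := admissible_split l_gt0 lmr rL m_max adm.
have [lm mr] := andP lmr.
have left_le := IH l m _ ltac:(lia) ltac:(lia) ltac:(lia) adm_l.
have right_le := IH m r _ ltac:(lia) ltac:(lia) ltac:(lia) adm_r.
have slm : s l != s m by apply: site_neq; lia.
have smr : s m != s r by apply: site_neq; lia.
have slr : s l != s r by apply: site_neq; lia.
have [p_gt0 q_gt0] : 0 < (m - l)%:R :> R /\ 0 < (r - m)%:R :> R.
  by rewrite !ltr0n !subn_gt0.
apply: le_trans (dform_split f H_ge0 beta slm smr slr p_gt0 q_gt0) _.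
have -> : (r - l)%:R = (m - l)%:R + (r - m)%:R :> R by rewrite -natrD; congr _%:R; lia.
by rewrite (big_cat_nat (ltnW lm) (ltnW mr)) /= split_bound_le.
Qed.

End PathBound.

Lemma bernoulli_measure_weight (R : realType) (Lam : {fset int}) (alpha : Lam -> R)
    (mu : config Lam -> R) :
  bernoulli_measure alpha mu ->
  exists2 H : nat -> R, forall n, 0 <= H n & mu =1 weight H alpha.
Proof.
case=> [[lam ->]|[k [_ ->]]]; last first.
  exists (fun n => if n == k then
    (\sum_(xi : config Lam | nparticles xi == k) gibbs_weight alpha xi)^-1 else 0).
    by move=> n; case: ifP => _ //; rewrite invr_ge0 sumr_ge0 // => xi _; rewrite expR_ge0.
  by move=> eta; rewrite /bern_canon /weight; case: ifP; rewrite ?mulr0.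
pose Z := \prod_(z : Lam) (1 + expR (alpha z + lam)).
exists (fun n => expR (lam * n%:R) / Z).
  by move=> n; rewrite divr_ge0 ?expR_ge0 ?prodr_ge0 // => z _; rewrite addr_ge0 ?expR_ge0.
move=> eta; rewrite /bern_prod /weight /energy /nparticles.
have site_prob z : (let p := expR (alpha z + lam) / (1 + expR (alpha z + lam)) in
    if eta z then p else 1 - p) =
    expR ((alpha z + lam) * (eta z)%:R) / (1 + expR (alpha z + lam)).
  have : 1 + expR (alpha z + lam) != 0 by rewrite gt_eqF // addr_gt0 ?expR_gt0.
  by case: (eta z) => /= ?; rewrite ?mulr1 ?mulr0 ?expR0 //; field.
rewrite (eq_bigr _ (fun z _ => site_prob z)) big_split /= prodfV -expR_sum natr_sum.
rewrite mulr_sumr mulrA -expRD -big_split /=.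
by congr (expR _ / _); apply: eq_bigr => z _; rewrite mulrDl.
Qed.

Local Open Scope fset_scope.

Theorem lemma5p2 (R : realType) (B : R) (L : nat) (Lam : {fset int})
  (alpha : Lam -> R) (mu : config Lam -> R) (f : config Lam -> R) :
  0 <= B -> (2 <= L)%N ->
  (forall x : nat, (1 <= x <= L)%N -> (x%:Z \in Lam)) ->
  (forall z : Lam, `|alpha z| <= B) ->
  bernoulli_measure alpha mu ->
  integ mu (fun eta => (f (swapZ 1 L%:Z eta) - f eta) ^+ 2)
  <= expR (13 * B) * L%:R *
     \sum_(1 <= x < L)
        integ mu (fun eta => (f (swapZ x%:Z (x.+1)%:Z eta) - f eta) ^+ 2).
Proof.
move=> B_ge0 L_ge2 LamL alpha_B /bernoulli_measure_weight[H H_ge0 muE].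
pose s x : Lam := insubd [` LamL 1%N (ltnW L_ge2)] x%:Z.
have sE x : (0 < x <= L)%N -> val (s x) = x%:Z by move/LamL; exact: insubdK.
have s_inj : {in [pred x | (0 < x <= L)%N] &, injective s}.
  by move=> x y xP yP /(congr1 val); rewrite !sE // => -[].
have integE x y : (0 < x <= L)%N -> (0 < y <= L)%N ->
    integ mu (fun eta => (f (swapZ x%:Z y%:Z eta) - f eta) ^+ 2) =
    dform H f alpha (s x) (s y).
  move=> xP yP; rewrite -(sE x) // -(sE y) // /integ /dform.
  by apply: eq_bigr => eta _; rewrite muE swapZ_exch.
rewrite (integE 1%N L) ?leqnn ?(ltnW L_ge2) //.
rewrite (eq_big_nat _ _ (F2 := fun x => dform H f alpha (s x) (s x.+1))) => [|x xL]; last first.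
  by rewrite integE //; lia.
apply: le_trans (dform_path_le f H_ge0 alpha_B s_inj _ (leqnn L) _) _.
- by rewrite L_ge2.
- exact: admissible_alpha.
apply: ler_wpM2r; first by apply: sumr_ge0 => x _; exact: dform_ge0.
rewrite mulrC; apply: ler_pM; rewrite ?ler0n ?expR_ge0 ?ler_nat ?leq_subr //.
by rewrite ler_expR; lra.
Qed.
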